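(* Under either the overlap preference model or the cost preference model, any pair $\langle R,F\rangle$ consisting of a non-wasteful shortlisting rule $R$ and an exhaustive allocation rule $F$ is neither R-FSSP-P nor R-FSSP-A (and hence also not R-FSSP-O).
   Context: Let $\mathbb{P}=\{p_1,\dots,p_m\}$ be a finite set of projects, $c:\mathbb{P}\to\mathbb{N}$ a cost function with $c(P)=\sum_{p\in P}c(p)$, $B\in\mathbb{N}$ a budget with $c(p)\le B$ for all $p$; agents $\mathcal{N}=\{1,\dots,n\}$. Tie-breaking: for a nonempty family $\mathfrak{P}$ of subsets of $\mathbb{P}$, $T(\mathfrak{P})$ is the unique $P\in\mathfrak{P}$ such that for all $P'\in\mathfrak{P}\setminus\{P\}$ the lowest-index project of $(P\setminus P')\cup(P'\setminus P)$ lies in $P$. Greedy selection $\mathit{GREED}(P,\gg)$, for $P\subseteq\mathbb{P}$ and a strict linear order $\gg$ on $P$, examines projects in the order $\gg$ and selects a project iff doing so keeps the total cost of selected projects at most $B$. Shortlisting stage: a shortlisting instance is $\langle\mathbb{P},c,B\rangle$; a shortlisting profile is $\boldsymbol{P}=(P_1,\dots,P_n)$, $P_i\subseteq\mathbb{P}$, $\bigcup\boldsymbol{P}=P_1\cup\dots\cup P_n$; $(\boldsymbol{P}_{-i},P_i')$ replaces $P_i$ by $P_i'$; a shortlisting rule $R$ outputs $R(I,\boldsymbol{P})\subseteq\bigcup\boldsymbol{P}$. $R$ is non-wasteful if for every $I,\boldsymbol{P}$, either $c(R(I,\boldsymbol{P}))\ge B$ or $R(I,\boldsymbol{P})=\bigcup\boldsymbol{P}$.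 Each agent $i$ has an awareness set $C_i\subseteq\mathbb{P}$; $\boldsymbol{C}=(C_1,\dots,C_n)$. Allocation stage: an allocation instance is $\langle\mathcal{P},c,B\rangle$, $\mathcal{P}\subseteq\mathbb{P}$; a profile $\boldsymbol{A}=(A_1,\dots,A_n)$, $A_i\subseteq\mathcal{P}$; $A\subseteq\mathcal{P}$ is feasible if $c(A)\le B$ and exhaustive if it is feasible and there is no $p\in\mathcal{P}\setminus A$ with $c(A\cup\{p\})\le B$; an allocation rule $F$ outputs a feasible $F(I,\boldsymbol{A})$, and is exhaustive if its output is always exhaustive. Preferences: each agent $i$ has a strict linear order $\rhd_i$ on $\mathbb{P}$; $\mathit{top}_i(\mathcal{P})=\mathit{GREED}(\mathcal{P},\rhd_i|_{\mathcal{P}})$, $\boldsymbol{top}(\mathcal{P})=(\mathit{top}_1(\mathcal{P}),\dots,\mathit{top}_n(\mathcal{P}))$. For $P\subseteq\mathbb{P}$: overlap model $A\succeq_P A'$ iff $|A\cap P|\ge|A'\cap P|$; cost model $A\succeq_P A'$ iff $c(A\cap P)\ge c(A'\cap P)$; $\succ_P$ its strict part. $\mathit{best}(\succ,\mathfrak{P})$ is the set of elements of $\mathfrak{P}$ undominated w.r.t. $\succ$. Best response: for $I=\langle\mathcal{P},c,B\rangle$, profile $\boldsymbol{A}$, agent $i$: $A_i^\star(I,\boldsymbol{A})=T(\mathit{best}(\succ_{\mathit{top}_i(\mathcal{P})},\{F(I,(\boldsymbol{A}_{-i},A_i'))\mid A_i'\subseteq\mathcal{P}\}))$ and $F^\star(I,\boldsymbol{A})=F(I,(\boldsymbol{A}_{-i},A_i^\star(I,\boldsymbol{A})))$.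 Manipulation: given $R,F$, shortlisting instance $I_1$, profile $\boldsymbol{P}$, agent $i$, $P_i'\subseteq\mathbb{P}$, let $\mathcal{P}=R(I_1,\boldsymbol{P})$, $\mathcal{P}'=R(I_1,(\boldsymbol{P}_{-i},P_i'))$, $I_2=\langle\mathcal{P},c,B\rangle$, $I_2'=\langle\mathcal{P}',c,B\rangle$, $Q=\mathit{top}_i(\mathcal{P}\cup\mathcal{P}')$. $P_i'$ is a successful pessimistic manipulation if for all profiles $\boldsymbol{A}$ on $\mathcal{P}$ and $\boldsymbol{A}'$ on $\mathcal{P}'$, $F^\star(I_2',\boldsymbol{A}')\succeq_Q F^\star(I_2,\boldsymbol{A})$, strictly for at least one pair; successful optimistic if for some $\boldsymbol{A}$ on $\mathcal{P}$ and some $\boldsymbol{A}'$ on $\mathcal{P}'$, $F^\star(I_2',\boldsymbol{A}')\succ_Q F^\star(I_2,\boldsymbol{A})$; successful anticipative if $F^\star(I_2',\boldsymbol{top}(\mathcal{P}'))\succ_Q F^\star(I_2,\boldsymbol{top}(\mathcal{P}))$. R-FSSP: for a preference model, $\langle R,F\rangle$ is R-FSSP w.r.t. a manipulation type if for every shortlisting instance, awareness profile $\boldsymbol{C}$, shortlisting profile $\boldsymbol{P}$ with $P_{i'}\subseteq C_{i'}$ for all $i'$, and agent $i$, there is no $P_i'\subseteq C_i$ such that submitting $P_i'$ instead of $\mathit{top}_i(C_i)$ (i.e., going from $(\boldsymbol{P}_{-i},\mathit{top}_i(C_i))$ to $(\boldsymbol{P}_{-i},P_i')$) is a successful manipulation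 of that type. R-FSSP-P, R-FSSP-O, R-FSSP-A refer to pessimistic, optimistic, anticipative manipulation. *)

(* Projects are 'I_m (index order = ordinal order),
   agents are 'I_n. *)
From mathcomp Require Import all_boot.
Set Implicit Arguments. Unset Strict Implicit. Unset Printing Implicit Defensive.

Definition cost (m : nat) (c : 'I_m -> nat) (S : {set 'I_m}) : nat :=
  \sum_(p in S) c p.

Definition valid_inst (m : nat) (c : 'I_m -> nat) (B : nat) : Prop :=
  forall p, c p <= B.

Definition upd (n : nat) (T : Type) (A : 'I_n -> T) (i : 'I_n) (x : T) : 'I_n -> T :=
  fun j => if j == i then x else A j.

(* a strict linear order on the projects is given by the list of all
   projects from most to least preferred *)
Definition is_pref (m : nat) (s : seq 'I_m) : Prop := perm_eq s (enum 'I_m).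

Definition greed (m : nat) (c : 'I_m -> nat) (B : nat) (s : seq 'I_m) : {set 'I_m} :=
  foldl (fun acc p => if cost c (p |: acc) <= B then p |: acc else acc) set0 s.

Definition top (m : nat) (c : 'I_m -> nat) (B : nat) (pref : seq 'I_m)
  (P : {set 'I_m}) : {set 'I_m} :=
  greed c B [seq p <- pref | p \in P].

Definition lex_beats (m : nat) (P P' : {set 'I_m}) : bool :=
  [exists p : 'I_m, [&& p \in P, p \notin P' &
     [forall q : 'I_m, (nat_of_ord q < nat_of_ord p)%N ==> ((q \in P) == (q \in P'))]]].

Definition tiebreak (m : nat) (fam : {set {set 'I_m}}) : {set 'I_m} :=
  odflt set0 [pick P in fam | [forall P' in fam, (P' != P) ==> lex_beats P P']].

Inductive pmodel := Overlap | CostModel.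

Definition weak_pref (M : pmodel) (m : nat) (c : 'I_m -> nat) (Q A A' : {set 'I_m}) : bool :=
  match M with
  | Overlap => #|A' :&: Q| <= #|A :&: Q|
  | CostModel => cost c (A' :&: Q) <= cost c (A :&: Q)
  end.

Definition strict_pref (M : pmodel) (m : nat) (c : 'I_m -> nat) (Q A A' : {set 'I_m}) : bool :=
  weak_pref M c Q A A' && ~~ weak_pref M c Q A' A.

Definition best (M : pmodel) (m : nat) (c : 'I_m -> nat) (Q : {set 'I_m})
  (fam : {set {set 'I_m}}) : {set {set 'I_m}} :=
  [set A in fam | ~~ [exists A' in fam, strict_pref M c Q A' A]].

(* A shortlisting rule maps an instance <'I_m, c, B> and a profile
   to a set of projects; an allocation rule maps an allocation instance
   <Pc, c, B> (Pc a subset of 'I_m) and a profile to a set of projects. *)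
Definition shortlisting_rule :=
  forall (m n : nat), ('I_m -> nat) -> nat -> ('I_n -> {set 'I_m}) -> {set 'I_m}.
Definition allocation_rule :=
  forall (m n : nat), ('I_m -> nat) -> nat -> {set 'I_m} -> ('I_n -> {set 'I_m}) -> {set 'I_m}.

Definition profile_on (m n : nat) (Pc : {set 'I_m}) (A : 'I_n -> {set 'I_m}) : Prop :=
  forall j, A j \subset Pc.

Definition is_shortlisting_rule (R : shortlisting_rule) : Prop :=
  forall m n (c : 'I_m -> nat) B (P : 'I_n -> {set 'I_m}),
    valid_inst c B -> R m n c B P \subset \bigcup_j P j.

Definition non_wasteful (R : shortlisting_rule) : Prop :=
  forall m n (c : 'I_m -> nat) B (P : 'I_n -> {set 'I_m}),
    valid_inst c B ->
    B <= cost c (R m n c B P) \/ R m n c B P = \bigcup_j P j.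

Definition feasible (m : nat) (c : 'I_m -> nat) (B : nat) (Pc S : {set 'I_m}) : Prop :=
  S \subset Pc /\ cost c S <= B.

Definition exhaustive_set (m : nat) (c : 'I_m -> nat) (B : nat) (Pc S : {set 'I_m}) : Prop :=
  feasible c B Pc S /\ (forall p, p \in Pc -> p \notin S -> B < cost c (p |: S)).

Definition is_allocation_rule (F : allocation_rule) : Prop :=
  forall m n (c : 'I_m -> nat) B Pc (A : 'I_n -> {set 'I_m}),
    valid_inst c B -> profile_on Pc A -> feasible c B Pc (F m n c B Pc A).

Definition exhaustive (F : allocation_rule) : Prop :=
  forall m n (c : 'I_m -> nat) B Pc (A : 'I_n -> {set 'I_m}),
    valid_inst c B -> profile_on Pc A -> exhaustive_set c B Pc (F m n c B Pc A).

Definition best_response (M : pmodel) (F : allocation_rule) (m n : nat)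
  (c : 'I_m -> nat) (B : nat) (prefs : 'I_n -> seq 'I_m) (Pc : {set 'I_m})
  (A : 'I_n -> {set 'I_m}) (i : 'I_n) : {set 'I_m} :=
  tiebreak (best M c (top c B (prefs i) Pc)
              [set F m n c B Pc (upd A i X) | X in powerset Pc]).

Definition Fstar (M : pmodel) (F : allocation_rule) (m n : nat)
  (c : 'I_m -> nat) (B : nat) (prefs : 'I_n -> seq 'I_m) (Pc : {set 'I_m})
  (A : 'I_n -> {set 'I_m}) (i : 'I_n) : {set 'I_m} :=
  F m n c B Pc (upd A i (best_response M F c B prefs Pc A i)).

Inductive manip_kind := Pessimistic | Optimistic | Anticipative.

Definition successful (k : manip_kind) (M : pmodel) (R : shortlisting_rule)
  (F : allocation_rule) (m n : nat) (c : 'I_m -> nat) (B : nat)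
  (prefs : 'I_n -> seq 'I_m) (P : 'I_n -> {set 'I_m}) (i : 'I_n)
  (Pi' : {set 'I_m}) : Prop :=
  let Pc := R m n c B P in
  let Pc' := R m n c B (upd P i Pi') in
  let Q := top c B (prefs i) (Pc :|: Pc') in
  match k with
  | Pessimistic =>
      (forall A A', profile_on Pc A -> profile_on Pc' A' ->
         weak_pref M c Q (Fstar M F c B prefs Pc' A' i) (Fstar M F c B prefs Pc A i))
      /\ (exists A A', profile_on Pc A /\ profile_on Pc' A' /\
         strict_pref M c Q (Fstar M F c B prefs Pc' A' i) (Fstar M F c B prefs Pc A i))
  | Optimistic =>
      exists A A', profile_on Pc A /\ profile_on Pc' A' /\
         strict_pref M c Q (Fstar M F c B prefs Pc' A' i) (Fstar M F c B prefs Pc A i)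
  | Anticipative =>
      strict_pref M c Q
        (Fstar M F c B prefs Pc' (fun j => top c B (prefs j) Pc') i)
        (Fstar M F c B prefs Pc (fun j => top c B (prefs j) Pc) i)
  end.

Definition R_FSSP (k : manip_kind) (M : pmodel) (R : shortlisting_rule)
  (F : allocation_rule) : Prop :=
  forall (m n : nat) (c : 'I_m -> nat) (B : nat), valid_inst c B ->
  forall (prefs : 'I_n -> seq 'I_m), (forall j, is_pref (prefs j)) ->
  forall (C P : 'I_n -> {set 'I_m}), (forall j, P j \subset C j) ->
  forall (i : 'I_n) (Pi' : {set 'I_m}), Pi' \subset C i ->
    ~ successful k M R F c B prefs (upd P i (top c B (prefs i) (C i))) i Pi'.

From mathcomp Require Import all_boot zify.
Set Implicit Arguments. Unset Strict Implicit. Unset Printing Implicit Defensive.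

(* One instance refutes all three properties. Projects z, x, w cost 1, 2, 1,
   the budget is 2, and both agents rank z > x > w. Agent 0 knows only x and
   w, agent 1 only z (and submits {z}). Truthfully agent 0 submits
   top{x, w} = {x}, so the shortlist lies inside {z, x}. Submitting {w}
   instead makes the ballots' union {z, w}, of cost exactly 2, which
   non-wastefulness forces to be the shortlist; the only exhaustive outcome on
   it is {z, w}. This is also agent 0's greedy top set Q of the joint
   shortlists (z is taken, x overflows, w fits), whereas every outcome on the
   truthful shortlist misses w: in both preference models the lie strictly
   wins against every pair of profiles. *)

Section Cost.

Variables (m : nat) (c : 'I_m -> nat).

Lemma cost_set1 p : cost c [set p] = c p.
Proof. exact: big_set1. Qed.

Lemma costU1 p (S : {set 'I_m}) :
  p \notin S -> cost c (p |: S) = c p + cost c S.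
Proof. exact: big_setU1. Qed.

Lemma leq_cost (S T : {set 'I_m}) : S \subset T -> cost c S <= cost c T.
Proof.
move=> sST; rewrite /cost [X in _ <= X](big_setID S) (setIidPr sST).
exact: leq_addr.
Qed.

Lemma exhaustive_set_all B (Pc S : {set 'I_m}) :
  cost c Pc <= B -> exhaustive_set c B Pc S -> S = Pc.
Proof.
move=> costPc [[sSPc _] exhS]; apply/eqP; rewrite eqEsubset sSPc /=.
apply/subsetP => p pPc; apply/negPn/negP => pNS.
have := exhS p pPc pNS; rewrite ltnNge => /negP; apply.
by apply: leq_trans costPc; apply: leq_cost; rewrite subUset sub1set pPc.
Qed.

Hypothesis c_gt0 : forall p, 0 < c p.

Lemma cost_subset_eq (S T : {set 'I_m}) :
  S \subset T -> cost c T <= cost c S -> S = T.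
Proof.
move=> sST costTS; apply/eqP; rewrite eqEsubset sST /=.
apply/subsetP => p pT; apply/negPn/negP => pNS.
have : cost c (p |: S) <= cost c T.
  by apply: leq_cost; rewrite subUset sub1set pT.
by rewrite costU1 //; have := c_gt0 p; lia.
Qed.

Lemma strict_pref_proper M (Q A S : {set 'I_m}) :
  S :&: Q \proper A :&: Q -> strict_pref M c Q A S.
Proof.
move=> ltSA; have sSA := proper_sub ltSA.
rewrite /strict_pref; case: M => /=.
  by rewrite subset_leq_card //= -ltnNge proper_card.
rewrite leq_cost //=; apply/negP => /(cost_subset_eq sSA) eqSA.
by move: ltSA; rewrite eqSA properE subxx.
Qed.

End Cost.

Lemma top_sub m (c : 'I_m -> nat) B pref (P : {set 'I_m}) :
  top c B pref P \subset P.
Proof.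
rewrite /top /greed; set step := fun acc p => _.
suff sub_acc (acc : {set 'I_m}) (s : seq 'I_m) :
    {subset s <= P} -> acc \subset P -> foldl step acc s \subset P.
  by apply: sub_acc; [move=> p; rewrite mem_filter => /andP[] | exact: sub0set].
elim: s acc => [|p s IHs] acc //= sPsP accP; apply: IHs => [q sq|].
  by apply: sPsP; rewrite inE sq orbT.
by rewrite /step; case: ifP => // _; rewrite subUset sub1set sPsP ?mem_head.
Qed.

Lemma non_wasteful_all R m n (c : 'I_m -> nat) B (P : 'I_n -> {set 'I_m}) :
  is_shortlisting_rule R -> non_wasteful R -> valid_inst c B ->
  (forall p, 0 < c p) -> cost c (\bigcup_j P j) <= B ->
  R m n c B P = \bigcup_j P j.
Proof.
move=> shortR wasteR cB c_gt0 costP.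
case: (wasteR _ _ _ _ P cB) => // costR.
apply: cost_subset_eq => //; first exact: shortR.
exact: leq_trans costR.
Qed.

Lemma profile_on_upd m n (Pc X : {set 'I_m}) (A : 'I_n -> {set 'I_m}) i :
  profile_on Pc A -> X \subset Pc -> profile_on Pc (upd A i X).
Proof. by move=> APc XPc j; rewrite /upd; case: (j == i). Qed.

Section BestResponse.

Variables (M : pmodel) (F : allocation_rule) (m n : nat).
Variables (c : 'I_m -> nat) (B : nat)
(prefs : 'I_n -> seq 'I_m) (Pc : {set 'I_m}).
Hypotheses (exhF : exhaustive F) (cB : valid_inst c B).

Lemma best_response_sub A i :
  profile_on Pc A -> best_response M F c B prefs Pc A i \subset Pc.
Proof.
move=> APc; rewrite /best_response /tiebreak.
case: pickP => [S /andP[] | _] /=; last exact: sub0set.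
rewrite inE => /andP[/imsetP[X XPc ->] _] _.
rewrite powersetE in XPc.
by have [[]] := exhF cB (profile_on_upd i APc XPc).
Qed.

Lemma Fstar_exhaustive A i :
  profile_on Pc A -> exhaustive_set c B Pc (Fstar M F c B prefs Pc A i).
Proof.
move=> APc; apply: exhF => //; apply: profile_on_upd => //.
exact: best_response_sub.
Qed.

End BestResponse.

Lemma successful_of_dominance k M R F m n (c : 'I_m -> nat) B prefs
    (P : 'I_n -> {set 'I_m}) i Pi' :
  let Pc := R m n c B P in
  let Pc' := R m n c B (upd P i Pi') in
  (forall A A', profile_on Pc A -> profile_on Pc' A' ->
     strict_pref M c (top c B (prefs i) (Pc :|: Pc'))
       (Fstar M F c B prefs Pc' A' i) (Fstar M F c B prefs Pc A i)) ->
  successful k M R F c B prefs P i Pi'.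
Proof.
move=> Pc Pc' dominates.
have empty_on Pc0 : profile_on Pc0 (fun _ : 'I_n => set0).
  by move=> j; exact: sub0set.
have top_on Pc0 : profile_on Pc0 (fun j => top c B (prefs j) Pc0).
  by move=> j; exact: top_sub.
have strict_ex : exists A A', profile_on Pc A /\ profile_on Pc' A' /\
    strict_pref M c (top c B (prefs i) (Pc :|: Pc'))
      (Fstar M F c B prefs Pc' A' i) (Fstar M F c B prefs Pc A i).
  exists (fun _ => set0), (fun _ => set0).
  by do ![split]; [exact: empty_on | exact: empty_on | apply: dominates].
case: k => /=; [split=> // | exact: strict_ex | exact: dominates].
by move=> A A' APc A'Pc'; case/andP: (dominates A A' APc A'Pc').
Qed.

Definition pz : 'I_3 := @Ordinal 3 0 erefl.
Definition px : 'I_3 := @Ordinal 3 1 erefl.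
Definition pw : 'I_3 := @Ordinal 3 2 erefl.
Definition ex_cost (p : 'I_3) : nat := if p == px then 2 else 1.

Definition liar : 'I_2 := @Ordinal 2 0 erefl.
Definition ex_prefs : 'I_2 -> seq 'I_3 := fun _ => [:: pz; px; pw].
Definition ex_aware (j : 'I_2) : {set 'I_3} :=
  if j == liar then [set px; pw] else [set pz].
Definition ex_ballots (j : 'I_2) : {set 'I_3} :=
  if j == liar then set0 else [set pz].

Lemma ex_ballots_aware j : ex_ballots j \subset ex_aware j.
Proof. by rewrite /ex_ballots /ex_aware; case: ifP; rewrite ?sub0set. Qed.

Lemma ex_lie_aware : [set pw] \subset ex_aware liar.
Proof. by rewrite /ex_aware /= sub1set !inE eqxx orbT. Qed.

Lemma ex_cost_gt0 p : 0 < ex_cost p.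
Proof. by rewrite /ex_cost; case: ifP. Qed.

Lemma ex_valid : valid_inst ex_cost 2.
Proof. by move=> p; rewrite /ex_cost; case: ifP. Qed.

Lemma ex_prefs_pref j : is_pref (ex_prefs j).
Proof.
rewrite /is_pref; have -> : enum 'I_3 = [:: pz; px; pw].
  by apply: (inj_map val_inj); rewrite val_enum_ord.
exact: perm_refl.
Qed.

Lemma ex_cost_zw : cost ex_cost [set pz; pw] = 2.
Proof. by rewrite costU1 ?cost_set1 ?inE. Qed.

Lemma ex_top_liar : top ex_cost 2 (ex_prefs liar) (ex_aware liar) = [set px].
Proof.
rewrite /top /ex_aware /= !inE /= /greed /=.
by rewrite setU0 cost_set1 /= costU1 ?inE // cost_set1.
Qed.

Lemma ex_top_union (Pc : {set 'I_3}) :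
  top ex_cost 2 (ex_prefs liar) (Pc :|: [set pz; pw]) = [set pz; pw].
Proof.
rewrite /top /= !inE !eqxx /= !orbT /=.
case: (px \in Pc); rewrite /greed /= setU0 cost_set1 /=.
  have -> : cost ex_cost [set px; pz] = 3 by rewrite costU1 ?inE // cost_set1.
  by rewrite /= costU1 ?inE // cost_set1 setUC.
by rewrite costU1 ?inE // cost_set1 /= setUC.
Qed.

Lemma ex_union_lie T :
  \bigcup_j upd (upd ex_ballots liar T) liar [set pw] j = [set pz; pw].
Proof. by rewrite big_ord_recl big_ord1 /upd /ex_ballots /= setUC. Qed.

Lemma ex_union_truthful :
  \bigcup_j upd ex_ballots liar [set px] j = [set pz; px].
Proof. by rewrite big_ord_recl big_ord1 /upd /ex_ballots /= setUC. Qed.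

Lemma ex_manipulation k M R F :
  is_shortlisting_rule R -> non_wasteful R -> exhaustive F ->
  successful k M R F ex_cost 2 ex_prefs
    (upd ex_ballots liar (top ex_cost 2 (ex_prefs liar) (ex_aware liar)))
    liar [set pw].
Proof.
move=> shortR wasteR exhF; rewrite ex_top_liar.
apply: successful_of_dominance => A A' APc A'Pc'.
have lie_shortlist :
    R 3 2 ex_cost 2 (upd (upd ex_ballots liar [set px]) liar [set pw])
    = [set pz; pw].
  rewrite non_wasteful_all ?ex_union_lie ?ex_cost_zw //.
  - exact: ex_valid.
  - exact: ex_cost_gt0.
rewrite lie_shortlist ex_top_union in A'Pc' *.
have lie_exh := Fstar_exhaustive M ex_prefs exhF ex_valid liar A'Pc'.
rewrite (exhaustive_set_all _ lie_exh) ?ex_cost_zw //.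
apply: strict_pref_proper; first exact: ex_cost_gt0.
rewrite setIid; apply/properP; split; first exact: subsetIr.
exists pw; first by rewrite !inE eqxx orbT.
have [[truthful_sub _] _] := Fstar_exhaustive M ex_prefs exhF ex_valid liar APc.
have shortlist_sub := shortR 3 2 _ _ (upd ex_ballots liar [set px]) ex_valid.
rewrite !inE eqxx orbT andbT; apply/negP.
move=> /(subsetP truthful_sub) /(subsetP shortlist_sub).
by rewrite ex_union_truthful !inE.
Qed.

Theorem theorem1 :
  forall (M : pmodel) (R : shortlisting_rule) (F : allocation_rule),
    is_shortlisting_rule R -> non_wasteful R ->
    is_allocation_rule F -> exhaustive F ->
    ~ R_FSSP Pessimistic M R F /\ ~ R_FSSP Anticipative M R F /\
    ~ R_FSSP Optimistic M R F.
Proof.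
(* An exhaustive allocation rule is in particular feasible. *)
move=> M R F shortR wasteR _ exhF.
have not_FSSP k : ~ R_FSSP k M R F.
  move=> FSSP; apply: (FSSP 3 2 ex_cost 2 ex_valid ex_prefs ex_prefs_pref
    ex_aware ex_ballots ex_ballots_aware liar [set pw] ex_lie_aware).
  exact: ex_manipulation.
by split; [|split]; apply: not_FSSP.
Qed.
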